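(* Let $\mathcal{G}=(G,\odot,\leq)$ be a real continuous Alo-group with $G$ an open interval of $\mathbb{R}$, and let $\tilde A=([a_{ij}^-,a_{ij}^+])$ be an $n\times n$ $[\mathcal{G}]$-reciprocal IPCM with associated matrices $L=(l_{ij})$, $R=(r_{ij})$. The following are equivalent: (1) $\tilde A$ is Liu's $[\mathcal{G}]$-consistent, i.e. $l_{ik}=l_{ij}\odot l_{jk}$ and $r_{ik}=r_{ij}\odot r_{jk}$ for all $i,j,k\in\{1,\dots,n\}$; (2) $l_{ik}=l_{ij}\odot l_{jk}$ and $r_{ik}=r_{ij}\odot r_{jk}$ for all $i<j<k$; (3) $\tilde a_{ik}=\tilde a_{ij}\odot_{[G]}\tilde a_{jk}$ for all $i<j<k$.
   Context: An Alo-group $(G,\odot,\leq)$ is an Abelian group with identity $e$ and a weak order $\leq$ such that $a\leq b\Rightarrow a\odot c\leq b\odot c$; real means $G\subseteq\mathbb{R}$ with usual order, continuous means $\odot$ is continuous. $[G]=\{[a^-,a^+]: a^-,a^+\in G,\ a^-\leq a^+\}$; $\tilde a^{(-1)}=[(a^+)^{(-1)},(a^-)^{(-1)}]$; $\tilde a\odot_{[G]}\tilde b=\{a\odot b: a\in\tilde a,b\in\tilde b\}$. An IPCM is an $n\times n$ matrix with entries in $[G]$; $[\mathcal{G}]$-reciprocal means $\tilde a_{ji}=\tilde a_{ij}^{(-1)}$ for all $i,j$. $L,R$ are defined by $l_{ij}=a_{ij}^-$ if $i<j$, $e$ if $i=j$, $a_{ij}^+$ if $i>j$; and $r_{ij}=a_{ij}^+$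 if $i<j$, $e$ if $i=j$, $a_{ij}^-$ if $i>j$. *)

From HB Require Import structures.
From mathcomp Require Import all_boot all_order all_algebra.
From mathcomp Require Import all_classical all_reals all_analysis.
Set Implicit Arguments. Unset Strict Implicit. Unset Printing Implicit Defensive.
Import Order.TTheory GRing.Theory Num.Theory.
Import numFieldNormedType.Exports.
Local Open Scope classical_set_scope.
Local Open Scope ring_scope.

(* The operation is given as a total
   function R -> R -> R; all axioms are only required on G. *)
Definition real_cont_alo_group (R : realType) (G : set R) (op : R -> R -> R)
    (e : R) (inv : R -> R) : Prop :=
  (exists a b : \bar R, G = [set x | (a < x%:E)%E /\ (x%:E < b)%E]) /\
  [/\ (forall x y, G x -> G y -> G (op x y)),
      (forall x y z, G x -> G y -> G z -> op x (op y z) = op (op x y) z),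
      (forall x y, G x -> G y -> op x y = op y x),
      G e /\ (forall x, G x -> op x e = x) &
      (forall x, G x -> G (inv x) /\ op x (inv x) = e)] /\
  (forall a b c, G a -> G b -> G c -> a <= b -> op a c <= op b c) /\
  {within G `*` G, continuous (fun p : R * R => op p.1 p.2)}.

Definition itv (R : realType) (a b : R) : set R := [set x | a <= x <= b].

Definition itv_op (R : realType) (op : R -> R -> R) (A B : set R) : set R :=
  [set z | exists2 x, A x & exists2 y, B y & z = op x y].

(* An n x n IPCM with entries in [G], entry (i,j) = [am i j, ap i j]. *)
Definition is_IPCM (R : realType) (G : set R) n (am ap : 'I_n -> 'I_n -> R) :=
  forall i j, [/\ G (am i j), G (ap i j) & am i j <= ap i j].

(* [G]-reciprocity: ã_ji = ã_ij^(-1) = [(a_ij^+)^(-1), (a_ij^-)^(-1)]. *)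
Definition G_reciprocal (R : realType) (inv : R -> R) n
    (am ap : 'I_n -> 'I_n -> R) :=
  forall i j, am j i = inv (ap i j) /\ ap j i = inv (am i j).

Definition Lmat (R : realType) (e : R) n (am ap : 'I_n -> 'I_n -> R)
    (i j : 'I_n) : R :=
  if (i < j)%N then am i j else if i == j then e else ap i j.

Definition Rmat (R : realType) (e : R) n (am ap : 'I_n -> 'I_n -> R)
    (i j : 'I_n) : R :=
  if (i < j)%N then ap i j else if i == j then e else am i j.

(* In an abelian group, a matrix M with M i i = e and M j i = (M i j)^(-1)
   satisfies M i k = M i j ⊙ M j k for all i, j, k as soon as it does for
   i < j < k, since the relation is stable under exchanging i, j and under
   exchanging j, k.  Both L and R are such matrices, and above the diagonal
   they hold the endpoints a_ij^- and a_ij^+.  Since G is an interval and ⊙ is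
   monotone, [a^-, a^+] ⊙ [b^-, b^+] = [a^- ⊙ b^-, a^+ ⊙ b^+]; two nonempty
   closed intervals coincide iff their endpoints do, so (2) and (3) say the
   same thing. *)

From mathcomp Require Import all_boot all_order all_algebra.
From mathcomp Require Import all_classical all_reals all_analysis.
From mathcomp Require Import zify.
Import Order.TTheory GRing.Theory Num.Theory.
Import numFieldNormedType.Exports.
Local Open Scope classical_set_scope.
Local Open Scope ring_scope.

Lemma itv_inj (R : realType) (a1 a2 b1 b2 : R) :
  a1 <= a2 -> itv a1 a2 = itv b1 b2 -> a1 = b1 /\ a2 = b2.
Proof.
move=> le_a E.
have /andP[b1a1 a1b2] : itv b1 b2 a1 by rewrite -E /itv /= lexx le_a.
have /andP[b1a2 a2b2] : itv b1 b2 a2 by rewrite -E /itv /= lexx le_a.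
have le_b := le_trans b1a1 a1b2.
have /andP[a1b1 _] : itv a1 a2 b1 by rewrite E /itv /= lexx le_b.
have /andP[_ b2a2] : itv a1 a2 b2 by rewrite E /itv /= lexx le_b.
by split; apply/eqP; rewrite eq_le ?a1b1 ?b1a1 ?a2b2 ?b2a2.
Qed.

Section AloGroup.

Context {R : realType} {G : set R} {op : R -> R -> R} {e : R} {inv : R -> R}.

Hypotheses (G_op : forall {x y}, G x -> G y -> G (op x y))
  (opA : forall {x y z}, G x -> G y -> G z -> op x (op y z) = op (op x y) z)
  (opC : forall {x y}, G x -> G y -> op x y = op y x)
  (G_e : G e) (ope : forall {x}, G x -> op x e = x)
  (G_inv : forall {x}, G x -> G (inv x))
  (op_inv : forall {x}, G x -> op x (inv x) = e).

Lemma eop {x} : G x -> op e x = x.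
Proof. by move=> Gx; rewrite opC ?ope. Qed.

Lemma inv_e : inv e = e.
Proof. by rewrite -{2}(op_inv G_e) eop //; apply: G_inv. Qed.

Lemma opKl {x y} : G x -> G y -> op (inv x) (op x y) = y.
Proof.
by move=> Gx Gy; have Gx' := G_inv Gx; rewrite opA // (opC Gx' Gx) op_inv // eop.
Qed.

Lemma opKr {x y} : G x -> G y -> op (op y x) (inv x) = y.
Proof. by move=> Gx Gy; rewrite -opA // ?op_inv ?ope //; apply: G_inv. Qed.

Lemma opVKl {x y} : G x -> G y -> op x (op (inv x) y) = y.
Proof. by move=> Gx Gy; rewrite opA // ?op_inv ?eop //; apply: G_inv. Qed.

Section Consistency.

Variables (n : nat) (M : 'I_n -> 'I_n -> R).
Hypotheses (G_M : forall i j, G (M i j)) (M_diag : forall i, M i i = e)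
  (M_recip : forall i j, M j i = inv (M i j)).

Definition consistent_at (i j k : 'I_n) := M i k = op (M i j) (M j k).

Lemma consistent_at_swap12 i j k : consistent_at i j k -> consistent_at j i k.
Proof. by rewrite /consistent_at (M_recip i j) => ->; rewrite opKl. Qed.

Lemma consistent_at_swap23 i j k : consistent_at i j k -> consistent_at i k j.
Proof. by rewrite /consistent_at (M_recip j k) => ->; rewrite opKr. Qed.

Lemma consistent_from_increasing :
  (forall i j k : 'I_n, (i < j)%N -> (j < k)%N -> consistent_at i j k) ->
  forall i j k, consistent_at i j k.
Proof.
move=> incr i j k; rewrite /consistent_at.
have [<-|nij] := eqVneq i j; first by rewrite M_diag eop.
have [<-|njk] := eqVneq j k; first by rewrite M_diag ope.
have [<-|nik] := eqVneq i k; first by rewrite M_diag (M_recip i j) op_inv.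
move: nij njk nik; rewrite -!val_eqE /= => nij njk nik.
have [ij|ji] : (i < j)%N \/ (j < i)%N by lia.
all: have [jk|kj] : (j < k)%N \/ (k < j)%N by lia.
all: have [ik|ki] : (i < k)%N \/ (k < i)%N by lia.
all: try (exfalso; lia).
- exact: incr.
- exact/consistent_at_swap23/incr.
- exact/consistent_at_swap23/consistent_at_swap12/incr.
- exact/consistent_at_swap12/incr.
- exact/consistent_at_swap12/consistent_at_swap23/incr.
- exact/consistent_at_swap12/consistent_at_swap23/consistent_at_swap12/incr.
Qed.

End Consistency.

Hypotheses
  (G_convex : forall {x y z}, G x -> G y -> x <= z <= y -> G z)
  (ler_op2r : forall {x y z}, G x -> G y -> G z -> x <= y -> op x z <= op y z).

Lemma ler_op2l {x y z} : G x -> G y -> G z -> x <= y -> op z x <= op z y.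
Proof. by move=> Gx Gy Gz xy; rewrite !(opC Gz) //; apply: ler_op2r. Qed.

Lemma itv_op_sub a1 a2 b1 b2 : G a1 -> G a2 -> G b1 -> G b2 ->
  itv_op op (itv a1 a2) (itv b1 b2) `<=` itv (op a1 b1) (op a2 b2).
Proof.
move=> Ga1 Ga2 Gb1 Gb2 _ [x /andP[a1x xa2] [y /andP[b1y yb2] ->]].
have Gx : G x by apply: (G_convex Ga1 Ga2); rewrite a1x xa2.
have Gy : G y by apply: (G_convex Gb1 Gb2); rewrite b1y yb2.
apply/andP; split.
  by apply: (le_trans (ler_op2r Ga1 Gx Gb1 a1x)); apply: ler_op2l.
by apply: (le_trans (ler_op2r Gx Ga2 Gy xa2)); apply: ler_op2l.
Qed.

Lemma itv_sub_op a1 a2 b1 b2 : G a1 -> G a2 -> G b1 -> G b2 ->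
  a1 <= a2 -> b1 <= b2 ->
  itv (op a1 b1) (op a2 b2) `<=` itv_op op (itv a1 a2) (itv b1 b2).
Proof.
move=> Ga1 Ga2 Gb1 Gb2 le_a le_b z /andP[lez gez].
have Gz : G z by apply: (G_convex (G_op Ga1 Gb1) (G_op Ga2 Gb2)); rewrite lez.
have Gb1' := G_inv Gb1; have Ga2' := G_inv Ga2.
(* Split at a2 ⊙ b1: below it, move along the first factor; above, along the second. *)
have [za2b1|a2b1z] := leP z (op a2 b1).
  exists (op z (inv b1)).
    apply/andP; split.
      by rewrite -{1}(opKr Gb1 Ga1); apply: ler_op2r => //; apply: G_op.
    by rewrite -{1}(opKr Gb1 Ga2); apply: ler_op2r => //; apply: G_op.
  exists b1; first by rewrite /itv /= lexx le_b.
  by rewrite -opA // (opC Gb1' Gb1) op_inv // ope.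
exists a2; first by rewrite /itv /= lexx le_a.
exists (op (inv a2) z); last by rewrite opVKl.
apply/andP; split.
  by rewrite -{1}(opKl Ga2 Gb1); apply: ler_op2l => //; [apply: G_op|apply: ltW].
by rewrite -{1}(opKl Ga2 Gb2); apply: ler_op2l => //; apply: G_op.
Qed.

Lemma itv_opE a1 a2 b1 b2 : G a1 -> G a2 -> G b1 -> G b2 ->
  a1 <= a2 -> b1 <= b2 ->
  itv_op op (itv a1 a2) (itv b1 b2) = itv (op a1 b1) (op a2 b2).
Proof.
move=> Ga1 Ga2 Gb1 Gb2 le_a le_b; apply/seteqP; split.
  exact: itv_op_sub.
exact: itv_sub_op.
Qed.

End AloGroup.

Lemma open_interval_convex (R : realType) (a b : \bar R) (x y z : R) :
  let G := [set t : R | (a < t%:E)%E /\ (t%:E < b)%E] in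
  G x -> G y -> x <= z <= y -> G z.
Proof.
move=> G [ax _] [_ yb] /andP[xz zy]; split.
  by apply: (lt_le_trans ax); rewrite lee_fin.
by apply: (le_lt_trans _ yb); rewrite lee_fin.
Qed.

Section PairwiseMatrices.

Variables (R : realType) (G : set R) (e : R) (inv : R -> R) (n : nat).
Variables (am ap : 'I_n -> 'I_n -> R).

Lemma Rmat_LmatE : Rmat e am ap = Lmat e ap am.
Proof. by []. Qed.

Lemma G_reciprocal_sym : G_reciprocal inv am ap -> G_reciprocal inv ap am.
Proof. by move=> rec i j; have [] := rec i j. Qed.

Lemma Lmat_lt (i j : 'I_n) : (i < j)%N -> Lmat e am ap i j = am i j.
Proof. by rewrite /Lmat => ->. Qed.

Lemma Lmat_diag (i : 'I_n) : Lmat e am ap i i = e.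
Proof. by rewrite /Lmat ltnn eqxx. Qed.

Lemma G_Lmat : G e -> (forall i j, G (am i j)) -> (forall i j, G (ap i j)) ->
  forall i j, G (Lmat e am ap i j).
Proof. by move=> Ge Gam Gap i j; rewrite /Lmat; do 2?case: ifP. Qed.

Lemma Lmat_reciprocal : G_reciprocal inv am ap -> inv e = e ->
  forall i j, Lmat e am ap j i = inv (Lmat e am ap i j).
Proof.
move=> rec inv_e i j; rewrite /Lmat; case: (ltngtP i j) => [ij|ji|/val_inj->].
- by rewrite eq_sym -val_eqE /= (ltn_eqF ij); have [] := rec i j.
- by rewrite -val_eqE /= (gtn_eqF ji); have [] := rec i j.
- by rewrite eqxx inv_e.
Qed.

End PairwiseMatrices.

Theorem proposition10 (R : realType) (G : set R) (op : R -> R -> R) (e : R)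
    (inv : R -> R) (n : nat) (am ap : 'I_n -> 'I_n -> R) :
  real_cont_alo_group G op e inv ->
  is_IPCM G am ap ->
  G_reciprocal inv am ap ->
  let L := Lmat e am ap in
  let Rm := Rmat e am ap in
  [<-> (* (1) Liu's [G]-consistency *)
       (forall i j k : 'I_n,
          L i k = op (L i j) (L j k) /\ Rm i k = op (Rm i j) (Rm j k));
       (* (2) *)
       (forall i j k : 'I_n, (i < j)%N -> (j < k)%N ->
          L i k = op (L i j) (L j k) /\ Rm i k = op (Rm i j) (Rm j k));
       (* (3) *)
       (forall i j k : 'I_n, (i < j)%N -> (j < k)%N ->
          itv (am i k) (ap i k) =
          itv_op op (itv (am i j) (ap i j)) (itv (am j k) (ap j k)))].
Proof.
move=> [[a [b HG]] [[G_op opA opC [G_e ope] G_inv] [ler_op2r _]]] IPCM rec L Rm.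
have G_convex x y z : G x -> G y -> x <= z <= y -> G z.
  by rewrite HG; apply: open_interval_convex.
have G_inv1 x (Gx : G x) := (G_inv x Gx).1.
have op_inv x (Gx : G x) := (G_inv x Gx).2.
have Gam i j : G (am i j) by have [] := IPCM i j.
have Gap i j : G (ap i j) by have [] := IPCM i j.
have consistent_itv (i j k : 'I_n) : (i < j)%N -> (j < k)%N ->
    L i k = op (L i j) (L j k) /\ Rm i k = op (Rm i j) (Rm j k) <->
    itv (am i k) (ap i k) = itv_op op (itv (am i j) (ap i j)) (itv (am j k) (ap j k)).
  move=> ij jk; have [_ _ le_ij] := IPCM i j; have [_ _ le_jk] := IPCM j k.
  have [_ _ le_ik] := IPCM i k.
  rewrite /L /Rm Rmat_LmatE !Lmat_lt ?(ltn_trans ij jk) //.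
  rewrite (itv_opE G_op opA opC G_e ope G_inv1 op_inv G_convex ler_op2r) //.
  by split=> [[-> ->] //|]; apply: itv_inj.
have consistentE := consistent_from_increasing opA opC G_e ope G_inv1 op_inv.
have inv_e := inv_e opC G_e ope G_inv1 op_inv.
tfae.
- by move=> cons i j k _ _; apply: cons.
- by move=> cons i j k ij jk; apply/consistent_itv/cons.
- move=> cons i j k.
  have incr i' j' k' ij jk := (consistent_itv i' j' k' ij jk).2 (cons i' j' k' ij jk).
  split; last rewrite /Rm Rmat_LmatE.
  all: apply: consistentE => [i' j'|i'|i' j'|i' j' k' ij jk].
  + exact: G_Lmat.
  + exact: Lmat_diag.
  + exact: Lmat_reciprocal.
  + exact: (incr i' j' k' ij jk).1.
  + exact: G_Lmat.
  + exact: Lmat_diag.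
  + exact/Lmat_reciprocal/inv_e/G_reciprocal_sym.
  + exact: (incr i' j' k' ij jk).2.
Qed.
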